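(* Let $(X,d,\kappa)$ be a digital metric space that is $\kappa$-connected, and suppose there are constants $M_1 \ge M_2 > 0$ such that for all $x,y\in X$, $x \ne y$ implies $d(x,y) \ge M_2$, and $x \leftrightarrow_\kappa y$ implies $d(x,y) \le M_1$. Let $f: X \to X$ be a digital contraction map with multiplier $\alpha$ such that $\alpha < M_2/M_1$. Then $f$ is a constant function.
   Context: A digital metric space is a triple $(X,d,\kappa)$ with $X\subset\mathbb{Z}^n$, $\kappa$ an adjacency relation on $X$ (written $x \leftrightarrow_\kappa y$), and $d$ a metric on $X$. $X$ is $\kappa$-connected if any two points are joined by a finite sequence of points of $X$ in which consecutive points are $\kappa$-adjacent. $f$ is a digital contraction map with multiplier $\alpha \in (0,1)$ if $d(f(x),f(y)) \le \alpha\, d(x,y)$ for all $x,y \in X$. *)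

From Stdlib Require Import Reals ZArith List.
Open Scope R_scope.

(* A point of Z^n is represented as a list of integers of length n. *)
Definition point := list Z.

Definition subset_Zn (n : nat) (X : point -> Prop) : Prop :=
  forall x, X x -> length x = n.

Definition adjacency (X : point -> Prop) (k : point -> point -> Prop) : Prop :=
  (forall x y, X x -> X y -> k x y -> k y x) /\
  (forall x, X x -> ~ k x x).

Definition is_metric (X : point -> Prop) (d : point -> point -> R) : Prop :=
  (forall x y, X x -> X y -> 0 <= d x y) /\
  (forall x y, X x -> X y -> (d x y = 0 <-> x = y)) /\
  (forall x y, X x -> X y -> d x y = d y x) /\
  (forall x y z, X x -> X y -> X z -> d x z <= d x y + d y z).

Fixpoint kpath (X : point -> Prop) (k : point -> point -> Prop)
    (x : point) (l : list point) (y : point) : Prop :=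
  match l with
  | nil => x = y
  | z :: l' => X z /\ k x z /\ kpath X k z l' y
  end.

Definition k_connected (X : point -> Prop) (k : point -> point -> Prop) : Prop :=
  forall x y, X x -> X y -> exists l, kpath X k x l y.

Definition digital_metric_space (n : nat) (X : point -> Prop)
    (d : point -> point -> R) (k : point -> point -> Prop) : Prop :=
  subset_Zn n X /\ adjacency X k /\ is_metric X d.

Definition maps_into (X : point -> Prop) (f : point -> point) : Prop :=
  forall x, X x -> X (f x).

Definition digital_contraction (X : point -> Prop) (d : point -> point -> R)
    (f : point -> point) (alpha : R) : Prop :=
  0 < alpha < 1 /\ forall x y, X x -> X y -> d (f x) (f y) <= alpha * d x y.

(** Adjacent points are at distance at most [M1], so a contraction with
    multiplier [alpha < M2 / M1] moves them to points at distance less than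
    [M2]; distinct points being at least [M2] apart, the images coincide.
    Hence [f] is constant along every κ-path, and so on the κ-connected [X]. *)

From Stdlib Require Import Reals ZArith List Lra.
Open Scope R_scope.

Section LocallyConstant.

Variables (X : point -> Prop) (k : point -> point -> Prop) (A : Type) (g : point -> A).
Hypothesis g_adjacent : forall a b, X a -> X b -> k a b -> g a = g b.

Lemma kpath_const (l : list point) :
  forall x y, X x -> kpath X k x l y -> g x = g y.
Proof.
  induction l as [|z l IH]; intros x y Hx Hpath; simpl in Hpath.
  - now subst.
  - destruct Hpath as [Hz [Hxz Hzy]].
    rewrite (g_adjacent x z Hx Hz Hxz).
    now apply IH.
Qed.

Lemma k_connected_const :
  k_connected X k -> forall x y, X x -> X y -> g x = g y.
Proof.
  intros Hconn x y Hx Hy.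
  destruct (Hconn x y Hx Hy) as [l Hpath].
  exact (kpath_const l x y Hx Hpath).
Qed.

End LocallyConstant.

Lemma separated_eq (X : point -> Prop) (d : point -> point -> R) (M2 : R) :
  (forall x y, X x -> X y -> x <> y -> d x y >= M2) ->
  forall x y, X x -> X y -> d x y < M2 -> x = y.
Proof.
  intros Hsep x y Hx Hy Hxy.
  destruct (list_eq_dec Z.eq_dec x y) as [E | E]; [exact E |].
  specialize (Hsep x y Hx Hy E); lra.
Qed.

Lemma lt_div_mul (alpha M1 M2 : R) : 0 < M1 -> alpha < M2 / M1 -> alpha * M1 < M2.
Proof.
  intros HM1 Halpha.
  apply (Rmult_lt_compat_r M1) in Halpha; [| exact HM1].
  unfold Rdiv in Halpha.
  now rewrite Rmult_assoc, Rinv_l, Rmult_1_r in Halpha by lra.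
Qed.

Lemma contraction_adjacent_eq (X : point -> Prop) (d : point -> point -> R)
    (k : point -> point -> Prop) (M1 M2 alpha : R) (f : point -> point) :
  (forall x y, X x -> X y -> x <> y -> d x y >= M2) ->
  (forall x y, X x -> X y -> k x y -> d x y <= M1) ->
  maps_into X f ->
  digital_contraction X d f alpha ->
  alpha * M1 < M2 ->
  forall a b, X a -> X b -> k a b -> f a = f b.
Proof.
  intros Hsep Hadj Hmap [[Halpha_pos _] Hcontr] HalphaM a b Ha Hb Hab.
  apply (separated_eq X d M2 Hsep); [now apply Hmap .. |].
  assert (Hab_M1 : alpha * d a b <= alpha * M1).
  { apply Rmult_le_compat_l; [lra | now apply Hadj]. }
  specialize (Hcontr a b Ha Hb).
  lra.
Qed.

Theorem mainTheorem5 (n : nat) (X : point -> Prop) (d : point -> point -> R)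
    (k : point -> point -> Prop) (M1 M2 alpha : R) (f : point -> point) :
  digital_metric_space n X d k ->
  k_connected X k ->
  M1 >= M2 -> M2 > 0 ->
  (forall x y, X x -> X y -> x <> y -> d x y >= M2) ->
  (forall x y, X x -> X y -> k x y -> d x y <= M1) ->
  maps_into X f ->
  digital_contraction X d f alpha ->
  alpha < M2 / M1 ->
  forall x y, X x -> X y -> f x = f y.
Proof.
  intros _ Hconn HM12 HM2 Hsep Hadj Hmap Hcontr Halpha.
  apply (k_connected_const X k point f); [| exact Hconn].
  apply (contraction_adjacent_eq X d k M1 M2 alpha f); try assumption.
  apply lt_div_mul; [lra | exact Halpha].
Qed.
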